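(* Let $g_n:=n^{3/2}$ for $n\in\mathbb{N}_0$, and define the sequence $\{\zeta_n\}_{n\in\mathbb{N}}$ by $\zeta_1:=\frac{4g_2-g_3}{g_1}=8\sqrt2-3\sqrt3$ and, for $n\ge2$, \[ \zeta_n:=\frac{g_{n+1}}{g_n}\left(4-\frac{g_{n+2}}{g_{n+1}}-\frac{g_{n-1}}{g_n}-\frac{g_{n+1}}{g_n}\frac{1}{\zeta_{n-1}}\right). \] Then the sequence is well defined (i.e. $\zeta_n\ne0$ for all $n$) and for all $n\in\mathbb{N}$, \[ \Big(1+\frac2n\Big)^{3/2}<\zeta_n<\Big(1+\frac3n\Big)^{3/2}. \] In particular $\zeta_n>0$ for all $n\in\mathbb{N}$. *)

From Stdlib Require Import Reals Lra.
Open Scope R_scope.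

(* g_n = n^{3/2}, written n * sqrt n so that g_0 = 0 holds literally. *)
Definition g (n : nat) : R := INR n * sqrt (INR n).

(* zeta_seq k = zeta_{k+1}  (index shift, paper's indices start at 1). *)
Fixpoint zeta_seq (k : nat) : R :=
  match k with
  | O => (4 * g 2 - g 3) / g 1
  | S k' =>
      let n := S k in
      (g (n + 1) / g n) *
        (4 - g (n + 2) / g (n + 1) - g (n - 1) / g n
           - (g (n + 1) / g n) * (1 / zeta_seq k'))
  end.

(* zeta n for n >= 1 as in the paper; zeta 0 is a junk value. *)
Definition zeta (n : nat) : R := zeta_seq (n - 1).

From Stdlib Require Import Reals Lra Lia.
Open Scope R_scope.

(* Put t = 1/n and let A, B, C, D be the values of x^(3/2) at 1 + t, 1 + 2t,
   1 + 3t and 1 - t.  Then the recurrence reads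
   zeta_n = 4A - B - AD - A^2 / zeta_(n-1), the claimed bounds on zeta_(n-1)
   are A/D and B/D, and those on zeta_n are B and C.  As the right-hand side
   increases with zeta_(n-1) > 0, the induction step reduces to
   B < A (2 - D) and B (A (4 - D) - C) < B^2 + A^2 D for 0 < t <= 1/2.
   Bounding sqrt (1 + x) by its second-order Taylor polynomial with a cubic
   error term turns both into polynomial inequalities in t. *)

Definition pow3_2 (x : R) : R := x * sqrt x.

Lemma Rpower_3_2 x : 0 < x -> Rpower x (3 / 2) = pow3_2 x.
Proof.
  intro Hx; replace (3 / 2) with (1 + / 2) by field.
  now rewrite Rpower_plus, Rpower_1, Rpower_sqrt.
Qed.

Lemma pow3_2_pos x : 0 < x -> 0 < pow3_2 x.
Proof. intro Hx; apply Rmult_lt_0_compat; [lra | now apply sqrt_lt_R0]. Qed.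

Lemma pow3_2_mult x y : 0 <= x -> 0 <= y -> pow3_2 (x * y) = pow3_2 x * pow3_2 y.
Proof. intros Hx Hy; unfold pow3_2; rewrite sqrt_mult_alt by lra; ring. Qed.

Lemma pow3_2_div x y : 0 <= x -> 0 < y -> pow3_2 (x / y) = pow3_2 x / pow3_2 y.
Proof.
  intros Hx Hy; unfold pow3_2; rewrite sqrt_div_alt by lra.
  field; split; [apply Rgt_not_eq, sqrt_lt_R0 |]; lra.
Qed.

Lemma pow3_2_sqr x : 0 <= x -> pow3_2 x * pow3_2 x = x ^ 3.
Proof.
  intro Hx; unfold pow3_2.
  replace (x * sqrt x * (x * sqrt x)) with (x * x * (sqrt x * sqrt x)) by ring.
  rewrite sqrt_sqrt by lra; ring.
Qed.

Definition sqrt_taylor (x : R) : R := 1 + x / 2 - x ^ 2 / 8.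

Lemma le_sqrt_of_sqr_le a b : a * a <= b -> a <= sqrt b.
Proof.
  intro Hab; destruct (Rle_or_lt a 0) as [Ha | Ha].
  - pose proof (sqrt_pos b); lra.
  - rewrite <- (sqrt_square a) by lra; now apply sqrt_le_1_alt.
Qed.

Lemma sqrt_le_of_le_sqr a b : 0 <= a -> b <= a * a -> sqrt b <= a.
Proof. intros Ha Hab; rewrite <- (sqrt_square a) by lra; now apply sqrt_le_1_alt. Qed.

Lemma sqrt_taylor_bounds_pos x : 0 <= x <= 3 / 2 ->
  sqrt_taylor x <= sqrt (1 + x) <= sqrt_taylor x + x ^ 3 / 16.
Proof.
  intro Hx; unfold sqrt_taylor; split.
  - apply le_sqrt_of_sqr_le.
    (* sqrt_taylor x ^ 2 = 1 + x - x ^ 3 * (8 - x) / 64 *)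
    assert (0 <= x ^ 3 * (8 - x)) by (apply Rmult_le_pos; [apply pow_le |]; lra).
    nra.
  - apply sqrt_le_of_le_sqr; [nra |].
    (* the square of the upper bound is 1 + x + x ^ 4 * (x ^ 2 + 4 * (1 - x) + 16) / 256 *)
    assert (0 <= x ^ 4 * (x ^ 2 + 4 * (1 - x) + 16)) by (apply Rmult_le_pos; [apply pow_le |]; nra).
    nra.
Qed.

Lemma sqrt_taylor_bounds_neg t : 0 <= t <= 1 / 2 ->
  sqrt_taylor (- t) - t ^ 3 / 8 <= sqrt (1 - t) <= sqrt_taylor (- t).
Proof.
  intro Ht; unfold sqrt_taylor; split.
  - apply le_sqrt_of_sqr_le.
    (* the square of the lower bound is 1 - t - t ^ 3 * (1/8 - 9t/64 - t^2/32 - t^3/64) *)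
    assert (0 <= t ^ 3 * (1 / 8 - 9 * t / 64 - t ^ 2 / 32 - t ^ 3 / 64)).
    { apply Rmult_le_pos; [apply pow_le; lra |].
      assert (t ^ 2 <= 1 / 4) by nra; assert (t ^ 3 <= 1 / 8) by nra; lra. }
    nra.
  - apply sqrt_le_of_le_sqr; nra.
Qed.

Lemma pow3_2_taylor_bounds_pos x : 0 <= x <= 3 / 2 ->
  (1 + x) * sqrt_taylor x <= pow3_2 (1 + x) <= (1 + x) * (sqrt_taylor x + x ^ 3 / 16).
Proof.
  intro Hx; destruct (sqrt_taylor_bounds_pos x Hx).
  unfold pow3_2; split; apply Rmult_le_compat_l; lra.
Qed.

Lemma pow3_2_taylor_bounds_neg t : 0 <= t <= 1 / 2 ->
  (1 - t) * (sqrt_taylor (- t) - t ^ 3 / 8) <= pow3_2 (1 - t) <= (1 - t) * sqrt_taylor (- t).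
Proof.
  intro Ht; destruct (sqrt_taylor_bounds_neg t Ht).
  unfold pow3_2; split; apply Rmult_le_compat_l; lra.
Qed.

Section TaylorEstimates.

Variable t : R.
Hypothesis Ht : 0 < t <= 1 / 2.

Lemma pow_succ_le_half k : t ^ S k <= t ^ k / 2.
Proof. simpl; pose proof (pow_lt t k ltac:(lra)); nra. Qed.

(* With [0 < t ^ k] and [t ^ S k <= t ^ k / 2] for all k up to the degree, lra
   treats the monomials as atoms and absorbs each negative monomial into the
   positive ones of lower degree. *)
Ltac monomial_chain n :=
  pose proof (pow_lt t n ltac:(lra));
  lazymatch n with
  | O => idtac
  | S ?m => pose proof (pow_succ_le_half m); monomial_chain m
  end.

Lemma taylor_lower_step :
  (1 + 2 * t) * (sqrt_taylor (2 * t) + (2 * t) ^ 3 / 16)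
  < (1 + t) * sqrt_taylor t * (2 - (1 - t) * sqrt_taylor (- t)).
Proof. unfold sqrt_taylor; monomial_chain 12%nat; lra. Qed.

Lemma taylor_mid_step :
  (1 + 3 * t) * (sqrt_taylor (3 * t) + (3 * t) ^ 3 / 16)
  < (1 + t) * sqrt_taylor t * (4 - (1 - t) * sqrt_taylor (- t)).
Proof. unfold sqrt_taylor; monomial_chain 12%nat; lra. Qed.

Lemma taylor_upper_step :
  (1 + 2 * t) * (sqrt_taylor (2 * t) + (2 * t) ^ 3 / 16) *
    ((1 + t) * (sqrt_taylor t + t ^ 3 / 16) * (4 - (1 - t) * (sqrt_taylor (- t) - t ^ 3 / 8))
     - (1 + 3 * t) * sqrt_taylor (3 * t))
  < (1 + 2 * t) ^ 3 + (1 + t) ^ 3 * ((1 - t) * (sqrt_taylor (- t) - t ^ 3 / 8)).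
Proof. unfold sqrt_taylor; monomial_chain 12%nat; lra. Qed.

Lemma pow3_2_step_of_taylor j c : 0 <= j * t <= 3 / 2 -> 1 <= c ->
  (1 + j * t) * (sqrt_taylor (j * t) + (j * t) ^ 3 / 16)
  < (1 + t) * sqrt_taylor t * (c - (1 - t) * sqrt_taylor (- t)) ->
  pow3_2 (1 + j * t) < pow3_2 (1 + t) * (c - pow3_2 (1 - t)).
Proof.
  intros Hj Hc Hpoly.
  destruct (pow3_2_taylor_bounds_pos t) as [A_lo _]; [lra |].
  destruct (pow3_2_taylor_bounds_pos (j * t)) as [_ B_hi]; [lra |].
  destruct (pow3_2_taylor_bounds_neg t) as [_ D_hi]; [lra |].
  assert (0 <= (1 + t) * sqrt_taylor t) by (unfold sqrt_taylor; nra).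
  assert (0 <= c - (1 - t) * sqrt_taylor (- t)) by (unfold sqrt_taylor; nra).
  assert ((1 + t) * sqrt_taylor t * (c - (1 - t) * sqrt_taylor (- t))
          <= pow3_2 (1 + t) * (c - pow3_2 (1 - t))) by (apply Rmult_le_compat; lra).
  lra.
Qed.

Lemma pow3_2_lower_step : pow3_2 (1 + 2 * t) < pow3_2 (1 + t) * (2 - pow3_2 (1 - t)).
Proof. apply pow3_2_step_of_taylor; [lra | lra | exact taylor_lower_step]. Qed.

Lemma pow3_2_mid_step : pow3_2 (1 + 3 * t) < pow3_2 (1 + t) * (4 - pow3_2 (1 - t)).
Proof. apply pow3_2_step_of_taylor; [lra | lra | exact taylor_mid_step]. Qed.

Lemma pow3_2_upper_step :
  pow3_2 (1 + 2 * t) * (pow3_2 (1 + t) * (4 - pow3_2 (1 - t)) - pow3_2 (1 + 3 * t))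
  < pow3_2 (1 + 2 * t) * pow3_2 (1 + 2 * t) + pow3_2 (1 + t) * pow3_2 (1 + t) * pow3_2 (1 - t).
Proof.
  rewrite !pow3_2_sqr by lra.
  destruct (pow3_2_taylor_bounds_pos t) as [_ A_hi]; [lra |].
  destruct (pow3_2_taylor_bounds_pos (2 * t)) as [_ B_hi]; [lra |].
  destruct (pow3_2_taylor_bounds_pos (3 * t)) as [C_lo _]; [lra |].
  destruct (pow3_2_taylor_bounds_neg t) as [D_lo D_hi]; [lra |].
  assert (D_le_1 : pow3_2 (1 - t) <= 1) by (unfold sqrt_taylor in D_hi; nra).
  pose proof (pow3_2_pos (1 + t) ltac:(lra)); pose proof (pow3_2_pos (1 + 2 * t) ltac:(lra)).
  pose proof pow3_2_mid_step.
  assert (pow3_2 (1 + t) * (4 - pow3_2 (1 - t))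
          <= (1 + t) * (sqrt_taylor t + t ^ 3 / 16) * (4 - (1 - t) * (sqrt_taylor (- t) - t ^ 3 / 8)))
    by (apply Rmult_le_compat; lra).
  assert (pow3_2 (1 + 2 * t) * (pow3_2 (1 + t) * (4 - pow3_2 (1 - t)) - pow3_2 (1 + 3 * t))
          <= (1 + 2 * t) * (sqrt_taylor (2 * t) + (2 * t) ^ 3 / 16) *
             ((1 + t) * (sqrt_taylor t + t ^ 3 / 16) * (4 - (1 - t) * (sqrt_taylor (- t) - t ^ 3 / 8))
              - (1 + 3 * t) * sqrt_taylor (3 * t)))
    by (apply Rmult_le_compat; lra).
  assert ((1 + t) ^ 3 * ((1 - t) * (sqrt_taylor (- t) - t ^ 3 / 8)) <= (1 + t) ^ 3 * pow3_2 (1 - t))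
    by (apply Rmult_le_compat_l; [apply pow_le |]; lra).
  pose proof taylor_upper_step; lra.
Qed.

End TaylorEstimates.

Lemma recurrence_step_bounds A B C D z :
  0 < A -> 0 < B -> 0 < D ->
  B < A * (2 - D) -> B * (A * (4 - D) - C) < B * B + A * A * D ->
  A / D < z < B / D ->
  B < 4 * A - B - A * D - A * A / z < C.
Proof.
  intros HA HB HD Hlow Hupp [Hz_lo Hz_hi].
  assert (HzD_lo : A < z * D).
  { replace A with (A / D * D) by (field; lra). now apply Rmult_lt_compat_r. }
  assert (HzD_hi : z * D < B).
  { replace B with (B / D * D) by (field; lra). now apply Rmult_lt_compat_r. }
  assert (Hz : 0 < z) by nra.
  unfold Rdiv; set (w := / z).
  assert (Hw : 0 < w) by now apply Rinv_0_lt_compat.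
  assert (Hzw : z * w = 1) by (unfold w; field; lra).
  assert (Aw_lt_D : A * w < D) by nra.
  assert (D_lt_Bw : D < B * w) by nra.
  split; nra.
Qed.

Lemma recurrence_rescale N z : 1 < N ->
  pow3_2 (N + 1) / pow3_2 N *
    (4 - pow3_2 (N + 2) / pow3_2 (N + 1) - pow3_2 (N - 1) / pow3_2 N
     - pow3_2 (N + 1) / pow3_2 N * (1 / z))
  = 4 * pow3_2 (1 + / N) - pow3_2 (1 + 2 * / N) - pow3_2 (1 + / N) * pow3_2 (1 - / N)
    - pow3_2 (1 + / N) * pow3_2 (1 + / N) / z.
Proof.
  intro HN.
  assert (Ht : 0 < / N < 1).
  { split; [apply Rinv_0_lt_compat; lra |].
    rewrite <- Rinv_1; apply Rinv_1_lt_contravar; lra. }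
  replace (N + 1) with (N * (1 + / N)) by (field; lra).
  replace (N + 2) with (N * (1 + 2 * / N)) by (field; lra).
  replace (N - 1) with (N * (1 - / N)) by (field; lra).
  rewrite !pow3_2_mult by lra.
  pose proof (pow3_2_pos N ltac:(lra)); pose proof (pow3_2_pos (1 + / N) ltac:(lra)).
  unfold Rdiv; rewrite Rmult_1_l; set (w := / z); field; lra.
Qed.

Lemma zeta_seq_succ k (t := / INR (S (S k))) :
  zeta_seq (S k) = 4 * pow3_2 (1 + t) - pow3_2 (1 + 2 * t) - pow3_2 (1 + t) * pow3_2 (1 - t)
                   - pow3_2 (1 + t) * pow3_2 (1 + t) / zeta_seq k.
Proof.
  change (zeta_seq (S k)) with
    (pow3_2 (INR (S (S k) + 1)) / pow3_2 (INR (S (S k))) *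
     (4 - pow3_2 (INR (S (S k) + 2)) / pow3_2 (INR (S (S k) + 1))
      - pow3_2 (INR (S (S k) - 1)) / pow3_2 (INR (S (S k)))
      - pow3_2 (INR (S (S k) + 1)) / pow3_2 (INR (S (S k))) * (1 / zeta_seq k))).
  assert (HN : 1 < INR (S (S k))) by (rewrite !S_INR; pose proof (pos_INR k); lra).
  rewrite plus_INR, plus_INR, minus_INR by lia.
  exact (recurrence_rescale (INR (S (S k))) (zeta_seq k) HN).
Qed.

Lemma zeta_seq_0_bounds :
  Rpower (1 + 2 / INR 1) (3 / 2) < zeta_seq 0 < Rpower (1 + 3 / INR 1) (3 / 2).
Proof.
  change (zeta_seq 0) with ((4 * pow3_2 (INR 2) - pow3_2 (INR 3)) / pow3_2 (INR 1)).
  replace (INR 3) with 3 by (simpl; ring); replace (INR 2) with 2 by (simpl; ring).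
  replace (INR 1) with 1 by reflexivity.
  replace (1 + 2 / 1) with 3 by field; replace (1 + 3 / 1) with (2 * 2) by field.
  rewrite !Rpower_3_2 by lra; unfold pow3_2.
  rewrite sqrt_1, sqrt_square by lra.
  pose proof (sqrt_sqrt 2 ltac:(lra)); pose proof (sqrt_sqrt 3 ltac:(lra)).
  pose proof (sqrt_pos 2); pose proof (sqrt_pos 3).
  assert (7 / 5 < sqrt 2 < 3 / 2) by (split; nra).
  assert (3 / 2 < sqrt 3 < 7 / 4) by (split; nra).
  replace ((4 * (2 * sqrt 2) - 3 * sqrt 3) / (1 * 1)) with (8 * sqrt 2 - 3 * sqrt 3) by field.
  lra.
Qed.

Lemma zeta_seq_bounds k :
  Rpower (1 + 2 / INR (S k)) (3 / 2) < zeta_seq k < Rpower (1 + 3 / INR (S k)) (3 / 2).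
Proof.
  induction k as [| k IH]; [exact zeta_seq_0_bounds |].
  rewrite zeta_seq_succ.
  set (N := INR (S (S k))) in *; set (t := / N).
  assert (HN : 2 <= N) by (unfold N; rewrite !S_INR; pose proof (pos_INR k); lra).
  assert (Ht : 0 < t <= 1 / 2).
  { unfold t; split; [apply Rinv_0_lt_compat; lra |].
    replace (1 / 2) with (/ 2) by field; apply Rinv_le_contravar; lra. }
  assert (Hprev : INR (S k) = N - 1) by (unfold N; rewrite (S_INR (S k)); ring).
  rewrite Hprev in IH.
  replace (1 + 2 / (N - 1)) with ((1 + t) / (1 - t)) in IH by (unfold t; field; lra).
  replace (1 + 3 / (N - 1)) with ((1 + 2 * t) / (1 - t)) in IH by (unfold t; field; lra).
  replace (1 + 2 / N) with (1 + 2 * t) by (unfold t; field; lra).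
  replace (1 + 3 / N) with (1 + 3 * t) by (unfold t; field; lra).
  rewrite !Rpower_3_2, !pow3_2_div in * by (try apply Rdiv_lt_0_compat; lra).
  apply recurrence_step_bounds;
    [apply pow3_2_pos; lra .. | apply pow3_2_lower_step, Ht | apply pow3_2_upper_step, Ht | exact IH].
Qed.

Theorem lemma3p1 :
  (forall n : nat, (1 <= n)%nat -> zeta n <> 0) /\
  (forall n : nat, (1 <= n)%nat ->
     Rpower (1 + 2 / INR n) (3 / 2) < zeta n /\
     zeta n < Rpower (1 + 3 / INR n) (3 / 2)).
Proof.
  assert (Hbounds : forall n : nat, (1 <= n)%nat ->
     Rpower (1 + 2 / INR n) (3 / 2) < zeta n < Rpower (1 + 3 / INR n) (3 / 2)).
  { intros [| k] Hn; [lia |].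
    unfold zeta; replace (S k - 1)%nat with k by lia.
    apply zeta_seq_bounds. }
  split; [| exact Hbounds].
  intros n Hn; destruct (Hbounds n Hn) as [Hlow _].
  assert (0 < Rpower (1 + 2 / INR n) (3 / 2)) by apply exp_pos.
  lra.
Qed.
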